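(* Let $(H,B_1,B_2)$ be a Rota-Baxter system of Hopf algebras with descendent Hopf algebra $H_{B_1,B_2}$. Then $B_1$ and $B_2$ (restricted to $H_1$) are Hopf algebra homomorphisms from $H_{B_1,B_2}$ to $H$. Moreover, $\operatorname{Im}(B_1)$ and $\operatorname{Im}(B_2)$ are Hopf subalgebras of $H$.
   Context: $\mathbb{F}$ is a field of characteristic $0$; Sweedler notation $\Delta(a)=a_1\otimes a_2$. A Rota-Baxter system of Hopf algebras is a triple $(H,B_1,B_2)$ where $(H,\cdot,1,\Delta,\epsilon,S)$ is a cocommutative Hopf algebra and $B_1,B_2:H\to H$ are coalgebra homomorphisms with $B_1(1)=B_2(1)=1$ such that for all $a,b\in H$: $B_1(a)B_1(b)=B_1(B_1(a_1)bS(B_2(a_2)))$ and $B_2(a)B_2(b)=B_2(B_1(a_1)bS(B_2(a_2)))$. Descendent operation $a\circ b=B_1(a_1)bS(B_2(a_2))$, cocycle $\sigma(a)=B_1(a_1)S(B_2(a_2))$, $H_1=\operatorname{Im}(\sigma)$. The descendent Hopf algebra $H_{B_1,B_2}$ is $H_1$ with product $\circ$, unit $1$, coproduct and counit the restrictions of $\Delta,\epsilon$, and antipode $T(a)=S(B_1(a_1))B_2(a_2)$. *)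

(* An element of H (x) H is represented by a
   finite list of simple tensors [:: (x_i, y_i)] meaning sum_i x_i (x) y_i;
   two such lists denote the same tensor iff they agree on every bilinear map
   into every F-vector space (universal property of the tensor product).
   Same for H (x) H (x) H with trilinear maps. *)
From HB Require Import structures.
From mathcomp Require Import all_boot all_order all_algebra.
Set Implicit Arguments. Unset Strict Implicit. Unset Printing Implicit Defensive.
Import GRing.Theory.
Local Open Scope ring_scope.

Section Hopf.
Variables (F : fieldType) (H : algType F).

Definition bilinear_map (W : lmodType F) (f : H -> H -> W) : Prop :=
  (forall (k : F) x y z, f (k *: x + y) z = k *: f x z + f y z) /\
  (forall (k : F) x y z, f z (k *: x + y) = k *: f z x + f z y).

Definition trilinear_map (W : lmodType F) (f : H -> H -> H -> W) : Prop :=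
  (forall (k : F) x y z u, f (k *: x + y) z u = k *: f x z u + f y z u) /\
  (forall (k : F) x y z u, f z (k *: x + y) u = k *: f z x u + f z y u) /\
  (forall (k : F) x y z u, f z u (k *: x + y) = k *: f z u x + f z u y).

Definition teq2 (s t : seq (H * H)) : Prop :=
  forall (W : lmodType F) (f : H -> H -> W), bilinear_map f ->
    \sum_(p <- s) f p.1 p.2 = \sum_(p <- t) f p.1 p.2.

Definition teq3 (s t : seq (H * H * H)) : Prop :=
  forall (W : lmodType F) (f : H -> H -> H -> W), trilinear_map f ->
    \sum_(p <- s) f p.1.1 p.1.2 p.2 = \sum_(p <- t) f p.1.1 p.1.2 p.2.

Definition linear_fun (W : lmodType F) (f : H -> W) : Prop :=
  forall (k : F) x y, f (k *: x + y) = k *: f x + f y.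

Definition linear_scal (f : H -> F) : Prop :=
  forall (k : F) x y, f (k *: x + y) = k * f x + f y.

Definition is_cocomm_hopf (Delta : H -> seq (H * H)) (eps : H -> F)
  (S : H -> H) : Prop :=
  [/\
      (forall (k : F) a b, teq2 (Delta (k *: a + b))
           ([seq (k *: p.1, p.2) | p <- Delta a] ++ Delta b)),
      (forall a, teq3 [seq (q.1, q.2, p.2) | p <- Delta a, q <- Delta p.1]
                      [seq (p.1, q.1, q.2) | p <- Delta a, q <- Delta p.2]),
      linear_scal eps /\
      (forall a, \sum_(p <- Delta a) eps p.1 *: p.2 = a /\
                 \sum_(p <- Delta a) eps p.2 *: p.1 = a),
      [/\ (forall a b, teq2 (Delta (a * b))
             [seq (p.1 * q.1, p.2 * q.2) | p <- Delta a, q <- Delta b]),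
          teq2 (Delta 1) [:: (1, 1)],
          (forall a b, eps (a * b) = eps a * eps b) & eps 1 = 1] &
      linear_fun S /\
      (forall a, \sum_(p <- Delta a) S p.1 * p.2 = eps a *: 1 /\
                 \sum_(p <- Delta a) p.1 * S p.2 = eps a *: 1)]
  /\
  (forall a, teq2 (Delta a) [seq (p.2, p.1) | p <- Delta a]).

Definition coalg_hom (Delta : H -> seq (H * H)) (eps : H -> F) (B : H -> H) :=
  [/\ linear_fun B,
      forall a, teq2 (Delta (B a)) [seq (B p.1, B p.2) | p <- Delta a] &
      forall a, eps (B a) = eps a].

Variables (Delta : H -> seq (H * H)) (eps : H -> F) (S B1 B2 : H -> H).

Definition circ (a b : H) : H := \sum_(p <- Delta a) B1 p.1 * b * S (B2 p.2).
Definition sigma (a : H) : H := \sum_(p <- Delta a) B1 p.1 * S (B2 p.2).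
Definition inH1 (x : H) : Prop := exists a, x = sigma a.
Definition antipodeT (a : H) : H := \sum_(p <- Delta a) S (B1 p.1) * B2 p.2.

Definition is_RB_system : Prop :=
  [/\ is_cocomm_hopf Delta eps S, coalg_hom Delta eps B1, coalg_hom Delta eps B2,
      B1 1 = 1 /\ B2 1 = 1 &
      (forall a b, B1 a * B1 b = B1 (circ a b)) /\
      (forall a b, B2 a * B2 b = B2 (circ a b))].

Definition desc_hopf_hom (B : H -> H) : Prop :=
  [/\ (forall (k : F) x y, inH1 x -> inH1 y -> B (k *: x + y) = k *: B x + B y) /\
      (forall x y, inH1 x -> inH1 y -> B (circ x y) = B x * B y),
      B 1 = 1,
      forall x, inH1 x -> teq2 (Delta (B x)) [seq (B p.1, B p.2) | p <- Delta x],
      forall x, inH1 x -> eps (B x) = eps x &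
      forall x, inH1 x -> B (antipodeT x) = S (B x)].

End Hopf.

Definition hopf_subalg (F : fieldType) (H : algType F)
  (Delta : H -> seq (H * H)) (S : H -> H) (U : H -> Prop) : Prop :=
  [/\ U 0 /\ (forall (k : F) x y, U x -> U y -> U (k *: x + y)),
      U 1,
      forall x y, U x -> U y -> U (x * y),
      forall x, U x -> exists s : seq (H * H),
          (forall p, p \in s -> U p.1 /\ U p.2) /\ teq2 (Delta x) s &
      forall x, U x -> U (S x)].

Definition image_of (H : Type) (B : H -> H) (y : H) : Prop := exists a, y = B a.

(** Everything rests on the identity [B (T a) = S (B a)] for [B] in [{B1, B2}].
   Coassociativity and cocommutativity, together with [T(a1) S(B2 a2) = S(B1 a)],
   give [a1 o T(a2) = eps(a) 1]; applying the [o]-multiplicative map [B] turns this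
   into [B(a1) B(T a2) = eps(a) 1], so [B \o T] is a right convolution inverse of [B].
   As [B] is a coalgebra map, [S \o B] is a left convolution inverse of [B], hence
   the two coincide.  The identity also shows that [Im B] is closed under [S]; the
   remaining axioms are immediate from the hypotheses. *)
From mathcomp Require Import all_boot all_order all_algebra.
Set Implicit Arguments. Unset Strict Implicit. Unset Printing Implicit Defensive.
Import GRing.Theory.
Local Open Scope ring_scope.

Section Multilinear.
Variables (F : fieldType) (H : algType F).

Lemma linear_fun0 (W : lmodType F) (f : H -> W) : linear_fun f -> f 0 = 0.
Proof.
move=> linf; have := linf 1 0 0; rewrite !scale1r addr0 => f00.
by apply: (addrI (f 0)); rewrite addr0 -f00.
Qed.

Lemma linear_funZ (W : lmodType F) (f : H -> W) k x :
  linear_fun f -> f (k *: x) = k *: f x.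
Proof. by move=> linf; have := linf k x 0; rewrite addr0 (linear_fun0 linf) addr0. Qed.

Lemma linear_fun_sum (W : lmodType F) (f : H -> W) I (s : seq I) (G : I -> H) :
  linear_fun f -> f (\sum_(i <- s) G i) = \sum_(i <- s) f (G i).
Proof.
move=> linf; elim: s => [|i s IHs]; first by rewrite !big_nil linear_fun0.
by rewrite !big_cons -IHs; have := linf 1 (G i) (\sum_(j <- s) G j); rewrite !scale1r.
Qed.

Lemma linear_fun_id : linear_fun (fun x : H => x).
Proof. by []. Qed.

Lemma linear_fun_comp (f g : H -> H) : linear_fun f -> linear_fun g -> linear_fun (f \o g).
Proof. by move=> linf ling k x y /=; rewrite ling linf. Qed.

Lemma bilinear_mapZl (W : lmodType F) (h : H -> H -> W) k x z :
  bilinear_map h -> h (k *: x) z = k *: h x z.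
Proof.
case=> linl _; have h0z : h 0 z = 0.
  have := linl 1 0 0 z; rewrite !scale1r addr0 => h00.
  by apply: (addrI (h 0 z)); rewrite addr0 -h00.
by have := linl k x 0 z; rewrite !addr0 h0z addr0.
Qed.

Lemma bilinear_mul (f g : H -> H) :
  linear_fun f -> linear_fun g -> bilinear_map (fun u v => f u * g v).
Proof.
move=> linf ling.
by split=> k x y z; rewrite ?(linf, ling) ?(mulrDl, mulrDr) -?(scalerAl, scalerAr).
Qed.

Lemma trilinear_mul (f g h : H -> H) : linear_fun f -> linear_fun g -> linear_fun h ->
  trilinear_map (fun u v w => f u * g v * h w).
Proof.
move=> linf ling linh.
by split; [|split]=> k x y z u;
  rewrite ?(linf, ling, linh) ?(mulrDl, mulrDr) -?(scalerAl, scalerAr).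
Qed.

Lemma trilinear_map_swap23 (W : lmodType F) (f : H -> H -> H -> W) :
  trilinear_map f -> trilinear_map (fun u v w => f u w v).
Proof. by case=> l1 [l2 l3]; split; [|split]=> *; rewrite ?(l1, l2, l3). Qed.

End Multilinear.

Arguments linear_fun_id {F H}.

Section CocommHopf.
Variables (F : fieldType) (H : algType F).
Variables (Delta : H -> seq (H * H)) (eps : H -> F) (S : H -> H).
Hypothesis hopfH : is_cocomm_hopf Delta eps S.

Lemma linear_fun_sum_Delta (W : lmodType F) (h : H -> H -> W) : bilinear_map h ->
  linear_fun (fun a => \sum_(p <- Delta a) h p.1 p.2).
Proof.
move=> bih k a b; have [[linDelta _ _ _ _] _] := hopfH.
rewrite (linDelta k a b W h bih) big_cat big_map /= scaler_sumr.
by congr (_ + _); apply: eq_bigr => p _; rewrite bilinear_mapZl.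
Qed.

Lemma sum_Delta_coassoc (W : lmodType F) (f : H -> H -> H -> W) a : trilinear_map f ->
  \sum_(p <- Delta a) \sum_(q <- Delta p.1) f q.1 q.2 p.2 =
  \sum_(p <- Delta a) \sum_(q <- Delta p.2) f p.1 q.1 q.2.
Proof.
move=> trif; have [[_ coassoc _ _ _] _] := hopfH.
by have := coassoc a W f trif; rewrite !big_allpairs_dep.
Qed.

Lemma sum_Delta_swap (W : lmodType F) (h : H -> H -> W) a : bilinear_map h ->
  \sum_(p <- Delta a) h p.1 p.2 = \sum_(p <- Delta a) h p.2 p.1.
Proof. by move=> bih; have [_ cocomm] := hopfH; rewrite (cocomm a W h bih) big_map. Qed.

Lemma counit_suml (W : lmodType F) (f : H -> W) a : linear_fun f ->
  \sum_(p <- Delta a) eps p.1 *: f p.2 = f a.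
Proof.
move=> linf; have [[_ _ [_ counit] _ _] _] := hopfH.
rewrite -{2}(proj1 (counit a)) linear_fun_sum //.
by apply: eq_bigr => p _; rewrite linear_funZ.
Qed.

Lemma counit_sumr (W : lmodType F) (f : H -> W) a : linear_fun f ->
  \sum_(p <- Delta a) eps p.2 *: f p.1 = f a.
Proof.
move=> linf; have [[_ _ [_ counit] _ _] _] := hopfH.
rewrite -{2}(proj2 (counit a)) linear_fun_sum //.
by apply: eq_bigr => p _; rewrite linear_funZ.
Qed.

Lemma linear_fun_antipode : linear_fun S.
Proof. by have [[_ _ _ _ []]] := hopfH. Qed.

Section CoalgHom.
Variable B : H -> H.
Hypothesis homB : coalg_hom Delta eps B.

Lemma coalg_hom_antipodel a : \sum_(p <- Delta a) S (B p.1) * B p.2 = eps a *: 1.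
Proof.
have [[_ _ _ _ [_ antipode]] _] := hopfH; have [_ DeltaB epsB] := homB.
have mulS : bilinear_map (fun u v : H => S u * v).
  exact: bilinear_mul linear_fun_antipode linear_fun_id.
by rewrite -(big_map (fun p => (B p.1, B p.2)) xpredT (fun p => S p.1 * p.2))
  -(DeltaB a H _ mulS) (proj1 (antipode _)) epsB.
Qed.

Lemma coalg_hom_antipoder a : \sum_(p <- Delta a) B p.1 * S (B p.2) = eps a *: 1.
Proof.
have [[_ _ _ _ [_ antipode]] _] := hopfH; have [_ DeltaB epsB] := homB.
have mulS : bilinear_map (fun u v : H => u * S v).
  exact: bilinear_mul linear_fun_id linear_fun_antipode.
by rewrite -(big_map (fun p => (B p.1, B p.2)) xpredT (fun p => p.1 * S p.2))
  -(DeltaB a H _ mulS) (proj2 (antipode _)) epsB.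
Qed.

(* [S \o B] is a left convolution inverse of [B], so it equals every right one. *)
Lemma coalg_hom_conv_inverse (g : H -> H) : linear_fun g ->
  (forall a, \sum_(p <- Delta a) B p.1 * g p.2 = eps a *: 1) ->
  forall a, g a = S (B a).
Proof.
move=> ling Bg a; have [linB _ _] := homB.
have linSB : linear_fun (fun x => S (B x)) := linear_fun_comp linear_fun_antipode linB.
rewrite -(counit_suml a ling).
transitivity (\sum_(p <- Delta a) \sum_(q <- Delta p.1) S (B q.1) * B q.2 * g p.2).
  by apply: eq_bigr => p _; rewrite -mulr_suml coalg_hom_antipodel -scalerAl mul1r.
rewrite (sum_Delta_coassoc a (trilinear_mul linSB linB ling)).
rewrite -(counit_sumr a linSB); apply: eq_bigr => p _ /=.
by under eq_bigr do rewrite -mulrA; rewrite -mulr_sumr Bg -scalerAr mulr1.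
Qed.

End CoalgHom.

Section RotaBaxterSystem.
Variables B1 B2 : H -> H.
Hypotheses (homB1 : coalg_hom Delta eps B1) (homB2 : coalg_hom Delta eps B2).

Local Notation T := (antipodeT Delta S B1 B2).
Local Notation circ := (circ Delta S B1 B2).

Let linB1 : linear_fun B1. Proof. by case: homB1. Qed.
Let linB2 : linear_fun B2. Proof. by case: homB2. Qed.
Let linSB1 : linear_fun (fun x => S (B1 x)).
Proof. exact: linear_fun_comp linear_fun_antipode linB1. Qed.
Let linSB2 : linear_fun (fun x => S (B2 x)).
Proof. exact: linear_fun_comp linear_fun_antipode linB2. Qed.

Lemma linear_fun_antipodeT : linear_fun T.
Proof. exact: linear_fun_sum_Delta (bilinear_mul linSB1 linB2). Qed.

Lemma antipodeT_antipode_B2 a : \sum_(p <- Delta a) T p.1 * S (B2 p.2) = S (B1 a).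
Proof.
transitivity (\sum_(p <- Delta a) \sum_(q <- Delta p.1) S (B1 q.1) * B2 q.2 * S (B2 p.2)).
  by apply: eq_bigr => p _; rewrite mulr_suml.
rewrite (sum_Delta_coassoc a (trilinear_mul linSB1 linB2 linSB2)).
rewrite -(counit_sumr a linSB1); apply: eq_bigr => p _ /=.
under eq_bigr do rewrite -mulrA.
by rewrite -mulr_sumr (coalg_hom_antipoder homB2) -scalerAr mulr1.
Qed.

(* Cocommutativity lets [T(a_2)] meet [S(B2(a_3))] after coassociativity. *)
Lemma circ_antipodeT a : \sum_(p <- Delta a) circ p.1 (T p.2) = eps a *: 1.
Proof.
have triT : trilinear_map (fun u v w => B1 u * T w * S (B2 v)).
  exact: trilinear_map_swap23 (trilinear_mul linB1 linear_fun_antipodeT linSB2).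
rewrite -(coalg_hom_antipoder homB1).
transitivity (\sum_(p <- Delta a) \sum_(q <- Delta p.1) B1 q.1 * T p.2 * S (B2 q.2)) => //.
rewrite (sum_Delta_coassoc a triT).
apply: eq_bigr => p _ /=; rewrite -antipodeT_antipode_B2.
under eq_bigr do rewrite -mulrA; rewrite -mulr_sumr; congr (_ * _).
by rewrite (sum_Delta_swap p.2 (bilinear_mul linear_fun_antipodeT linSB2)).
Qed.

Section Descendent.
Variable B : H -> H.
Hypotheses (homB : coalg_hom Delta eps B) (B_1 : B 1 = 1).
Hypothesis B_circ : forall a b, B a * B b = B (circ a b).

Lemma antipodeT_hom a : B (T a) = S (B a).
Proof.
have [linB _ _] := homB.
apply: (coalg_hom_conv_inverse homB (linear_fun_comp linB linear_fun_antipodeT)) => {}a /=.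
under eq_bigr do rewrite B_circ.
by rewrite -linear_fun_sum // circ_antipodeT linear_funZ // B_1.
Qed.

Lemma desc_hopf_hom_RB : desc_hopf_hom Delta eps S B1 B2 B.
Proof.
have [linB DeltaB epsB] := homB.
split=> [||x _|x _|x _].
- by split=> [k x y _ _|x y _ _]; [exact: linB | rewrite B_circ].
- exact: B_1.
- exact: DeltaB.
- exact: epsB.
- exact: antipodeT_hom.
Qed.

Lemma hopf_subalg_image : hopf_subalg Delta S (image_of B).
Proof.
have [linB DeltaB _] := homB.
split.
- split; first by exists 0; rewrite (linear_fun0 linB).
  by move=> k _ _ [a ->] [b ->]; exists (k *: a + b); rewrite linB.
- by exists 1.
- by move=> _ _ [a ->] [b ->]; exists (circ a b).
- move=> _ [a ->]; exists [seq (B p.1, B p.2) | p <- Delta a]; split; last exact: DeltaB.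
  by move=> _ /mapP [p _ ->]; split; [exists p.1 | exists p.2].
- by move=> _ [a ->]; exists (T a); rewrite antipodeT_hom.
Qed.

End Descendent.
End RotaBaxterSystem.
End CocommHopf.

Theorem mainTheorem10 (F : fieldType) (H : algType F)
  (Delta : H -> seq (H * H)) (eps : H -> F) (S B1 B2 : H -> H) :
  [pchar F] =i pred0 ->
  is_RB_system Delta eps S B1 B2 ->
  [/\ desc_hopf_hom Delta eps S B1 B2 B1,
      desc_hopf_hom Delta eps S B1 B2 B2,
      hopf_subalg Delta S (image_of B1) &
      hopf_subalg Delta S (image_of B2)].
Proof.
move=> _ [hopfH homB1 homB2 [B1_1 B2_1] [B1_circ B2_circ]].
have desc_hom := desc_hopf_hom_RB hopfH homB1 homB2.
have subalg := hopf_subalg_image hopfH homB1 homB2.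
by split; [exact: desc_hom B1_circ | exact: desc_hom B2_circ
          | exact: subalg B1_circ | exact: subalg B2_circ].
Qed.
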